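(* Let $p,q$ be nonnegative integers, $a_1,\dots,a_p,b_1,\dots,b_q,d,e,f$ complex parameters and $x,y$ complex variables such that all series involved converge and all terms are defined. Then $$\sum_{n\ge0}\frac{(a_1)_n\cdots(a_p)_n(d)_n\,x^ny^n}{(b_1)_n\cdots(b_q)_n\,n!}\,{}_2F_2\!\left[\begin{matrix}d+n,\ e+2\\ f+1,\ e\end{matrix};x\right]=\sum_{n\ge0}\frac{(d)_n(e+2)_n\,x^n}{(f+1)_n(e)_n\,n!}\,{}_{p+3}F_{q+1}\!\left[\begin{matrix}-n,\ 1-e-n,\ -f-n,\ a_1,\dots,a_p\\ -1-e-n,\ b_1,\dots,b_q\end{matrix};y\right].$$
   Context: $(a)_k=a(a+1)\cdots(a+k-1)$ (with $(a)_0=1$) is the Pochhammer symbol. The generalized hypergeometric series is ${}_pF_q\!\left[\begin{matrix}a_1,\dots,a_p\\ b_1,\dots,b_q\end{matrix};z\right]=\sum_{k\ge0}\frac{(a_1)_k\cdots(a_p)_k}{(b_1)_k\cdots(b_q)_k}\frac{z^k}{k!}$; with a numerator parameter $-n$ ($n$ a nonnegative integer) it terminates after the $k=n$ term. *)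

From Stdlib Require Import Reals List Factorial.
From Coquelicot Require Import Coquelicot.
Open Scope C_scope.

Fixpoint poch (a : C) (k : nat) : C :=
  match k with
  | O => 1
  | S k' => poch a k' * (a + RtoC (INR k'))
  end.

Definition poch_prod (l : list C) (k : nat) : C :=
  fold_right (fun a acc => poch a k * acc) 1 l.

(* sum of a complex series (componentwise real Series; meaningful when it converges) *)
Definition CSeries (u : nat -> C) : C :=
  (Series (fun n => Re (u n)), Series (fun n => Im (u n))).

Definition hyp_term (num den : list C) (z : C) (k : nat) : C :=
  poch_prod num k / poch_prod den k * Cpow z k / RtoC (INR (fact k)).

(* generalized hypergeometric series pFq[num; den; z], p = length num, q = length den *)
Definition hypF (num den : list C) (z : C) : C := CSeries (hyp_term num den z).

Definition lhs_coef (a b : list C) (d x y : C) (n : nat) : C :=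
  poch_prod a n * poch d n * Cpow x n * Cpow y n
    / (poch_prod b n * RtoC (INR (fact n))).

Definition lhs_num (d e : C) (n : nat) : list C := (d + RtoC (INR n)) :: (e + 2) :: nil.
Definition lhs_den (e f : C) : list C := (f + 1) :: e :: nil.

Definition lhs_term (a b : list C) (d e f x y : C) (n : nat) : C :=
  lhs_coef a b d x y n * hypF (lhs_num d e n) (lhs_den e f) x.

Definition rhs_num (a : list C) (e f : C) (n : nat) : list C :=
  (- RtoC (INR n)) :: (1 - e - RtoC (INR n)) :: (- f - RtoC (INR n)) :: a.
Definition rhs_den (b : list C) (e : C) (n : nat) : list C :=
  (-1 - e - RtoC (INR n)) :: b.

Definition rhs_term (a b : list C) (d e f x y : C) (n : nat) : C :=
  poch d n * poch (e + 2) n * Cpow x n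
    / (poch (f + 1) n * poch e n * RtoC (INR (fact n)))
  * hypF (rhs_num a e f n) (rhs_den b e n) y.

(* the double array of the LHS: n-th outer, k-th inner term *)
Definition lhs_double (a b : list C) (d e f x y : C) (n k : nat) : C :=
  lhs_coef a b d x y n * hyp_term (lhs_num d e n) (lhs_den e f) x k.

(* Expanding the 2F2 on the left gives a double series in (n, k). Applying the reflection
   (c)_(n+k) = (c)_k (-1)^n (1-c-n-k)_n to (e+2), (f+1), (e) and to (n+k)! shows that its
   (n, k) term is the n-th term of the terminating p+3Fq+1 inside the (n+k)-th term of the
   right-hand side. Since the double series converges absolutely, it may be summed along the
   antidiagonals n + k = m, which gives the right-hand side. Complex series are sums of their
   real and imaginary parts, so everything reduces to real series. *)

From Stdlib Require Import Reals List Factorial Lia Lra.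
From Coquelicot Require Import Coquelicot.
Open Scope R_scope.

Lemma sum_Sn_R (f : nat -> R) N : sum_n f (S N) = sum_n f N + f (S N).
Proof. exact (sum_Sn f N). Qed.

Lemma sum_n_nonneg (f : nat -> R) N : (forall i, 0 <= f i) -> 0 <= sum_n f N.
Proof.
  intros Hf; induction N as [|N IH].
  - rewrite sum_O; apply Hf.
  - rewrite sum_Sn_R; specialize (Hf (S N)); lra.
Qed.

Lemma sum_n_minus (f g : nat -> R) N : sum_n (fun i => f i - g i) N = sum_n f N - sum_n g N.
Proof.
  induction N as [|N IH]; [now rewrite !sum_O|].
  rewrite !sum_Sn_R, IH; lra.
Qed.

Lemma sum_n_le_loc (f g : nat -> R) N :
  (forall i, (i <= N)%nat -> f i <= g i) -> sum_n f N <= sum_n g N.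
Proof.
  induction N as [|N IH]; intros Hfg.
  - rewrite !sum_O; apply Hfg; lia.
  - rewrite !sum_Sn_R; apply Rplus_le_compat; [apply IH; intros; apply Hfg|apply Hfg]; lia.
Qed.

Lemma sum_n_le_add (f : nat -> R) N j : (forall i, 0 <= f i) -> sum_n f N <= sum_n f (N + j).
Proof.
  intros Hf; induction j as [|j IH]; [rewrite Nat.add_0_r; lra|].
  rewrite Nat.add_succ_r, sum_Sn_R; specialize (Hf (S (N + j))); lra.
Qed.

Lemma is_series_ge_sum_n (f : nat -> R) l N :
  (forall i, 0 <= f i) -> is_series f l -> sum_n f N <= l.
Proof.
  intros Hf Hl.
  apply (is_lim_seq_le (fun _ => sum_n f N) (fun n => sum_n f (n + N)) (sum_n f N) l).
  - intros n; rewrite Nat.add_comm; apply sum_n_le_add, Hf.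
  - apply is_lim_seq_const.
  - apply (is_lim_seq_incr_n (sum_n f) N), Hl.
Qed.

Lemma Series_ge_sum_n (f : nat -> R) N :
  (forall i, 0 <= f i) -> ex_series f -> sum_n f N <= Series f.
Proof. intros Hf Hex; apply is_series_ge_sum_n, Series_correct; assumption. Qed.

Lemma Series_nonneg (f : nat -> R) : (forall i, 0 <= f i) -> ex_series f -> 0 <= Series f.
Proof.
  intros Hf Hex; apply Rle_trans with (sum_n f 0); [rewrite sum_O; apply Hf|].
  apply Series_ge_sum_n; assumption.
Qed.

Lemma is_series_eventually_0 (f : nat -> R) N :
  (forall i, (N < i)%nat -> f i = 0) -> is_series f (sum_n f N).
Proof.
  intros Hf; enough (H : is_lim_seq (sum_n f) (sum_n f N)) by exact H.
  apply (is_lim_seq_ext_loc (fun _ => sum_n f N)); [|apply is_lim_seq_const].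
  exists N; intros M HM; replace M with (N + (M - N))%nat by lia.
  induction (M - N)%nat as [|j IH]; [now rewrite Nat.add_0_r|].
  rewrite Nat.add_succ_r, sum_Sn_R, <- IH, Hf by lia; lra.
Qed.

Lemma is_lim_seq_sum_n (u : nat -> nat -> R) (l : nat -> R) N :
  (forall i, is_lim_seq (u i) (l i)) ->
  is_lim_seq (fun K => sum_n (fun i => u i K) N) (sum_n l N).
Proof.
  intros Hu; induction N as [|N IH].
  - rewrite sum_O; apply (is_lim_seq_ext (u 0%nat)); [intros; now rewrite sum_O|apply Hu].
  - rewrite sum_Sn_R; apply (is_lim_seq_ext (fun K => sum_n (fun i => u i K) N + u (S N) K)).
    + intros; now rewrite sum_Sn_R.
    + apply is_lim_seq_plus'; [exact IH|apply Hu].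
Qed.

Definition antidiagonal_sum (a : nat -> nat -> R) (m : nat) : R :=
  sum_n (fun i => a i (m - i)%nat) m.

Lemma sum_n_antidiagonal_sum (a : nat -> nat -> R) M :
  sum_n (antidiagonal_sum a) M = sum_n (fun i => sum_n (a i) (M - i)) M.
Proof.
  unfold antidiagonal_sum; induction M as [|M IH]; [now rewrite !sum_O|].
  rewrite !sum_Sn_R, IH, Nat.sub_diag, sum_O.
  rewrite (sum_n_ext_loc (fun i => sum_n (a i) (S M - i))
             (fun i => sum_n (a i) (M - i) + a i (S M - i)%nat)).
  - rewrite (sum_n_plus (G := R_AbelianMonoid)); unfold plus; simpl; lra.
  - intros i Hi; replace (S M - i)%nat with (S (M - i)) by lia; now rewrite sum_Sn_R.
Qed.

Section NonnegativeDoubleSeries.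
Variable a : nat -> nat -> R.
Hypothesis a_nonneg : forall n k, 0 <= a n k.
Hypothesis ex_series_row : forall n, ex_series (a n).
Hypothesis ex_series_rows : ex_series (fun n => Series (a n)).

Lemma sum_n_antidiagonal_le_Series M :
  sum_n (antidiagonal_sum a) M <= Series (fun n => Series (a n)).
Proof.
  rewrite sum_n_antidiagonal_sum.
  apply Rle_trans with (sum_n (fun i => Series (a i)) M).
  - apply sum_n_le_loc; intros; apply Series_ge_sum_n; auto.
  - apply Series_ge_sum_n; [intros; apply Series_nonneg|]; auto.
Qed.

Lemma sum_n_rows_le_antidiagonal N K :
  sum_n (fun i => sum_n (a i) K) N <= sum_n (antidiagonal_sum a) (N + K).
Proof.
  rewrite sum_n_antidiagonal_sum.
  apply Rle_trans with (sum_n (fun i => sum_n (a i) (N + K - i)) N).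
  - apply sum_n_le_loc; intros i Hi.
    replace (N + K - i)%nat with (K + (N - i))%nat by lia; apply sum_n_le_add; auto.
  - apply sum_n_le_add; intros; apply sum_n_nonneg; auto.
Qed.

Lemma is_series_antidiagonal_nonneg :
  is_series (antidiagonal_sum a) (Series (fun n => Series (a n))).
Proof.
  set (total := Series (fun n => Series (a n))).
  assert (diag_nonneg : forall m, 0 <= antidiagonal_sum a m).
  { intros; apply sum_n_nonneg; auto. }
  destruct (ex_finite_lim_seq_incr (sum_n (antidiagonal_sum a)) total) as [L HL].
  - intros n; rewrite sum_Sn_R; specialize (diag_nonneg (S n)); lra.
  - apply sum_n_antidiagonal_le_Series.
  - assert (L_le_total : L <= total).
    { apply (is_lim_seq_le _ (fun _ => total) L total sum_n_antidiagonal_le_Series HL).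
      apply is_lim_seq_const. }
    assert (total_le_L : total <= L).
    { assert (rows_le_L : forall N, sum_n (fun i => Series (a i)) N <= L).
      { intros N; apply (is_lim_seq_le (fun K => sum_n (fun i => sum_n (a i) K) N) (fun _ => L)
                          (sum_n (fun i => Series (a i)) N) L).
        - intros K; eapply Rle_trans; [apply sum_n_rows_le_antidiagonal|].
          apply is_series_ge_sum_n; [exact diag_nonneg|exact HL].
        - apply (is_lim_seq_sum_n (fun i K => sum_n (a i) K)); intros i.
          apply Series_correct; auto.
        - apply is_lim_seq_const. }
      apply (is_lim_seq_le _ (fun _ => L) total L rows_le_L (Series_correct _ ex_series_rows)).
      apply is_lim_seq_const. }
    replace total with L by lra; exact HL.
Qed.

End NonnegativeDoubleSeries.

Lemma Series_rows_antidiagonal (a : nat -> nat -> R) :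
  (forall n, ex_series (fun k => Rabs (a n k))) ->
  ex_series (fun n => Series (fun k => Rabs (a n k))) ->
  Series (fun n => Series (a n)) = Series (antidiagonal_sum a).
Proof.
  intros abs_row abs_rows.
  set (b := fun n k => Rabs (a n k)).
  (* a = c - b with both c and b nonnegative *)
  set (c := fun n k => Rabs (a n k) + a n k).
  assert (c_bounds : forall n k, 0 <= c n k <= 2 * b n k).
  { intros n k; unfold b, c; split_Rabs; lra. }
  assert (ex_c_row : forall n, ex_series (c n)).
  { intros n; apply (ex_series_plus (fun k => Rabs (a n k)) (a n)); auto.
    apply ex_series_Rabs, abs_row. }
  assert (ex_c_rows : ex_series (fun n => Series (c n))).
  { apply (ex_series_le (fun n => Series (c n)) (fun n => 2 * Series (b n))).
    - intros n; change (Rabs (Series (c n)) <= 2 * Series (b n)).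
      rewrite Rabs_pos_eq by (apply Series_nonneg; [apply c_bounds|apply ex_c_row]).
      rewrite <- Series_scal_l; apply Series_le; [apply c_bounds|].
      apply (ex_series_scal_l 2 (b n)), abs_row.
    - apply (ex_series_scal_l 2 (fun n => Series (b n))), abs_rows. }
  assert (row_diff : forall n, Series (a n) = Series (c n) - Series (b n)).
  { intros n; rewrite <- Series_minus by (apply ex_c_row || apply abs_row).
    apply Series_ext; intros; unfold b, c; lra. }
  rewrite (Series_ext _ _ row_diff), Series_minus by (apply ex_c_rows || apply abs_rows).
  symmetry; apply is_series_unique.
  eapply is_series_ext;
    [|apply (is_series_minus _ _ _ _
              (is_series_antidiagonal_nonneg c (fun n k => proj1 (c_bounds n k)) ex_c_row ex_c_rows)
              (is_series_antidiagonal_nonneg b (fun n k => Rabs_pos _) abs_row abs_rows))].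
  intros m; change (antidiagonal_sum c m - antidiagonal_sum b m = antidiagonal_sum a m).
  unfold antidiagonal_sum; rewrite <- sum_n_minus.
  apply sum_n_ext; intros; unfold b, c; lra.
Qed.

Open Scope C_scope.

Lemma RtoC_INR_add (n k : nat) : RtoC (INR (n + k)) = RtoC (INR n) + RtoC (INR k).
Proof. now rewrite plus_INR, RtoC_plus. Qed.

Lemma RtoC_INR_S (n : nat) : RtoC (INR (S n)) = RtoC (INR n) + 1.
Proof. now rewrite S_INR, RtoC_plus. Qed.

Lemma poch_add (c : C) (n k : nat) : poch c (n + k) = poch c n * poch (c + RtoC (INR n)) k.
Proof.
  induction k as [|k IH]; simpl.
  - rewrite Nat.add_0_r; ring.
  - rewrite Nat.add_succ_r; simpl; rewrite IH, RtoC_INR_add; ring.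
Qed.

Lemma poch_Sr (c : C) (n : nat) : poch c (S n) = c * poch (c + 1) n.
Proof.
  revert c; induction n as [|n IH]; intros c; [simpl; ring|].
  change (poch c (S n) * (c + RtoC (INR (S n))) = c * (poch (c + 1) n * (c + 1 + RtoC (INR n)))).
  rewrite IH, RtoC_INR_S; ring.
Qed.

Lemma poch_reflect (c : C) (n : nat) : poch c n = Cpow (-1) n * poch (1 - c - RtoC (INR n)) n.
Proof.
  induction n as [|n IH]; [simpl; ring|].
  change (poch c n * (c + RtoC (INR n)) = Cpow (-1) (S n) * poch (1 - c - RtoC (INR (S n))) (S n)).
  rewrite poch_Sr, IH.
  replace (1 - c - RtoC (INR (S n)) + 1) with (1 - c - RtoC (INR n)) by (rewrite RtoC_INR_S; ring).
  rewrite RtoC_INR_S; simpl; ring.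
Qed.

Lemma poch_add_reflect (c z : C) (n k : nat) :
  z = 1 - c - RtoC (INR (n + k)) -> poch c (n + k) = poch c k * Cpow (-1) n * poch z n.
Proof.
  intros ->; rewrite Nat.add_comm, poch_add, (poch_reflect (c + RtoC (INR k)) n), RtoC_INR_add.
  replace (1 - (c + RtoC (INR k)) - RtoC (INR n))
    with (1 - c - (RtoC (INR k) + RtoC (INR n))) by ring.
  ring.
Qed.

Lemma poch_add_reflect_neq0 (c z : C) (n k : nat) :
  z = 1 - c - RtoC (INR (n + k)) -> poch c (n + k) <> 0 -> poch c k <> 0 /\ poch z n <> 0.
Proof.
  intros Hz Hc; rewrite (poch_add_reflect c z n k Hz) in Hc.
  split; intros E; apply Hc; rewrite E; ring.
Qed.

Lemma RtoC_INR_fact (m : nat) : RtoC (INR (fact m)) = poch 1 m.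
Proof.
  induction m as [|m IH]; [reflexivity|].
  rewrite fact_simpl, mult_INR, RtoC_mult, RtoC_INR_S; simpl; rewrite <- IH; ring.
Qed.

Lemma RtoC_INR_fact_neq0 (m : nat) : RtoC (INR (fact m)) <> 0.
Proof. intros E; apply (INR_fact_neq_0 m); now injection E. Qed.

Lemma poch_opp_nat_gt (m n : nat) : (m < n)%nat -> poch (- RtoC (INR m)) n = 0.
Proof.
  induction n as [|n IH]; intros H; [lia|].
  simpl; destruct (Nat.eq_dec n m) as [->|Hne]; [ring|rewrite IH by lia; ring].
Qed.

Lemma Cpow_opp1_mul_self (n : nat) : Cpow (-1) n * Cpow (-1) n = 1.
Proof. induction n as [|n IH]; simpl; [ring|]. rewrite <- IH; ring. Qed.

Definition rhs_coef (d e f x : C) (m : nat) : C :=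
  poch d m * poch (e + 2) m * Cpow x m / (poch (f + 1) m * poch e m * RtoC (INR (fact m))).

Lemma lhs_double_reindex (a b : list C) (d e f x y : C) (n k : nat) :
  poch_prod b n <> 0 -> poch (f + 1) (n + k) <> 0 -> poch e (n + k) <> 0 ->
  poch (-1 - e - RtoC (INR (n + k))) n <> 0 ->
  lhs_double a b d e f x y n k =
  rhs_coef d e f x (n + k) * hyp_term (rhs_num a e f (n + k)) (rhs_den b e (n + k)) y n.
Proof.
  intros Hb Hf He Hq.
  destruct (poch_add_reflect_neq0 (f + 1) (- f - RtoC (INR (n + k))) n k) as [Hf1 Hf2];
    [ring|exact Hf|].
  destruct (poch_add_reflect_neq0 e (1 - e - RtoC (INR (n + k))) n k) as [He1 He2];
    [ring|exact He|].
  destruct (poch_add_reflect_neq0 1 (- RtoC (INR (n + k))) n k) as [Hk1 Hk2]; [ring| |].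
  { rewrite <- RtoC_INR_fact; apply RtoC_INR_fact_neq0. }
  assert (Hn := RtoC_INR_fact_neq0 n).
  unfold lhs_double, lhs_coef, hyp_term, lhs_num, lhs_den, rhs_num, rhs_den, rhs_coef.
  cbn [poch_prod fold_right]; fold (poch_prod a n) (poch_prod b n).
  rewrite (poch_add d n k), Cpow_add_r, (RtoC_INR_fact (n + k)), (RtoC_INR_fact k).
  rewrite (poch_add_reflect (e + 2) (-1 - e - RtoC (INR (n + k))) n k),
          (poch_add_reflect (f + 1) (- f - RtoC (INR (n + k))) n k),
          (poch_add_reflect e (1 - e - RtoC (INR (n + k))) n k),
          (poch_add_reflect 1 (- RtoC (INR (n + k))) n k) by ring.
  (* the reflections leave (-1)^n in the numerator and (-1)^(3n) in the denominator *)
  assert (Hs := Cpow_opp1_mul_self n).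
  set (s := Cpow (-1) n) in *.
  assert (Hs0 : s <> 0) by (intros E; rewrite E in Hs; apply C1_nz; rewrite <- Hs; ring).
  match goal with |- ?L = _ => transitivity (L / (s * s)); [rewrite Hs; field; tauto|] end.
  field; tauto.
Qed.

Lemma Im_le_Cmod (c : C) : Rabs (Im c) <= Cmod c.
Proof.
  destruct c as [u v]; unfold Cmod, Im; simpl.
  rewrite <- sqrt_Rsqr_abs; apply sqrt_le_1_alt; unfold Rsqr; nra.
Qed.

Lemma ex_series_le_Cmod (q : C -> R) (t : nat -> C) :
  (forall z, Rabs (q z) <= Cmod z) ->
  ex_series (fun k => Cmod (t k)) -> ex_series (fun k => q (t k)).
Proof. intros Hq Ht; apply (ex_series_le (fun k => q (t k)) (fun k => Cmod (t k))); auto. Qed.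

Lemma Re_Cmult_CSeries (c : C) (t : nat -> C) :
  ex_series (fun k => Re (t k)) -> ex_series (fun k => Im (t k)) ->
  Re (c * CSeries t) = Series (fun k => Re (c * t k)).
Proof.
  intros Hre Him; destruct c as [c1 c2]; unfold CSeries, Re, Im in *; simpl.
  rewrite <- !Series_scal_l, <- Series_minus.
  - now apply Series_ext.
  - apply (ex_series_scal_l c1 (fun k => fst (t k))), Hre.
  - apply (ex_series_scal_l c2 (fun k => snd (t k))), Him.
Qed.

Lemma Im_Cmult_CSeries (c : C) (t : nat -> C) :
  ex_series (fun k => Re (t k)) -> ex_series (fun k => Im (t k)) ->
  Im (c * CSeries t) = Series (fun k => Im (c * t k)).
Proof.
  intros Hre Him; destruct c as [c1 c2]; unfold CSeries, Re, Im in *; simpl.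
  rewrite <- !Series_scal_l, <- Series_plus.
  - now apply Series_ext.
  - apply (ex_series_scal_l c1 (fun k => snd (t k))), Him.
  - apply (ex_series_scal_l c2 (fun k => fst (t k))), Hre.
Qed.

Lemma hyp_term_rhs_gt (a b : list C) (e f y : C) (m i : nat) :
  (m < i)%nat -> hyp_term (rhs_num a e f m) (rhs_den b e m) y i = 0.
Proof.
  intros Hi; unfold hyp_term, rhs_num; cbn [poch_prod fold_right].
  rewrite poch_opp_nat_gt by exact Hi; unfold Cdiv; ring.
Qed.

Section RealLinearFunctional.
(* [pr] will be [Re] or [Im]. *)
Variable pr : C -> R.
Hypothesis pr_le_Cmod : forall z, Rabs (pr z) <= Cmod z.
Hypothesis pr_Cmult_CSeries : forall c t,
  ex_series (fun k => Re (t k)) -> ex_series (fun k => Im (t k)) ->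
  pr (c * CSeries t) = Series (fun k => pr (c * t k)).

Lemma pr_0 : pr 0 = 0%R.
Proof.
  apply Rabs_eq_0, Rle_antisym; [|apply Rabs_pos].
  eapply Rle_trans; [apply pr_le_Cmod|rewrite Cmod_0; apply Rle_refl].
Qed.

Lemma pr_lhs_term (a b : list C) (d e f x y : C) (n : nat) :
  ex_series (fun k => Cmod (hyp_term (lhs_num d e n) (lhs_den e f) x k)) ->
  pr (lhs_term a b d e f x y n) = Series (fun k => pr (lhs_double a b d e f x y n k)).
Proof.
  intros Hx; unfold lhs_term, hypF; rewrite pr_Cmult_CSeries; [reflexivity| |];
    apply ex_series_le_Cmod; auto using re_le_Cmod, Im_le_Cmod.
Qed.

Lemma pr_rhs_term (a b : list C) (d e f x y : C) (m : nat) :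
  (forall n : nat, poch_prod b n <> 0) ->
  poch (f + 1) m <> 0 -> poch e m <> 0 ->
  (forall n : nat, (n <= m)%nat -> poch (-1 - e - RtoC (INR m)) n <> 0) ->
  pr (rhs_term a b d e f x y m) = antidiagonal_sum (fun n k => pr (lhs_double a b d e f x y n k)) m.
Proof.
  intros Hb Hf He Hq.
  set (u := hyp_term (rhs_num a e f m) (rhs_den b e m) y).
  assert (u_finite : forall q : C -> R, q 0 = 0%R ->
            is_series (fun k => q (u k)) (sum_n (fun k => q (u k)) m)).
  { intros q Hq0; apply is_series_eventually_0; intros i Hi; unfold u.
    now rewrite hyp_term_rhs_gt. }
  unfold rhs_term; fold (rhs_coef d e f x m) u; unfold hypF.
  rewrite pr_Cmult_CSeries by (eexists; apply u_finite; reflexivity); fold u.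
  assert (pr_coef_0 : pr (rhs_coef d e f x m * 0) = 0%R) by (rewrite Cmult_0_r; apply pr_0).
  rewrite (is_series_unique _ _ (u_finite (fun z => pr (rhs_coef d e f x m * z)) pr_coef_0)).
  apply sum_n_ext_loc; intros i Hi; f_equal; unfold u.
  assert (Hm : (i + (m - i))%nat = m) by lia.
  rewrite lhs_double_reindex, Hm; [reflexivity|apply Hb|rewrite Hm; exact Hf|rewrite Hm; exact He|].
  rewrite Hm; apply Hq, Hi.
Qed.

Lemma Series_pr_lhs_rhs (a b : list C) (d e f x y : C) :
  (forall n : nat, poch_prod b n <> 0) ->
  (forall k : nat, poch (f + 1) k <> 0) ->
  (forall k : nat, poch e k <> 0) ->
  (forall n k : nat, (k <= n)%nat -> poch (-1 - e - RtoC (INR n)) k <> 0) ->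
  (forall n : nat, ex_series (fun k => Cmod (hyp_term (lhs_num d e n) (lhs_den e f) x k))) ->
  (forall n : nat, ex_series (fun k => Cmod (lhs_double a b d e f x y n k))) ->
  ex_series (fun n => Series (fun k => Cmod (lhs_double a b d e f x y n k))) ->
  Series (fun n => pr (lhs_term a b d e f x y n)) = Series (fun n => pr (rhs_term a b d e f x y n)).
Proof.
  intros Hb Hf He Hq Hx abs_row abs_rows.
  set (T := fun n k => pr (lhs_double a b d e f x y n k)).
  assert (abs_row_T : forall n, ex_series (fun k => Rabs (T n k))).
  { intros n; apply (ex_series_le_Cmod (fun z => Rabs (pr z))), abs_row.
    intros z; rewrite Rabs_Rabsolu; apply pr_le_Cmod. }
  rewrite (Series_ext _ _ (fun n => pr_lhs_term a b d e f x y n (Hx n))).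
  rewrite (Series_ext _ _ (fun m => pr_rhs_term a b d e f x y m Hb (Hf m) (He m) (Hq m))).
  apply Series_rows_antidiagonal; [exact abs_row_T|].
  apply (ex_series_le (fun n => Series (fun k => Rabs (T n k)))
                      (fun n => Series (fun k => Cmod (lhs_double a b d e f x y n k))));
    [|exact abs_rows].
  intros n; change (Rabs (Series (fun k => Rabs (T n k)))
                    <= Series (fun k => Cmod (lhs_double a b d e f x y n k))).
  rewrite Rabs_pos_eq by (apply Series_nonneg; [intros; apply Rabs_pos|apply abs_row_T]).
  apply Series_le; [intros; split; [apply Rabs_pos|apply pr_le_Cmod]|apply abs_row].
Qed.

End RealLinearFunctional.

Theorem mainTheorem8 (a b : list C) (d e f x y : C) :
  (* all terms are defined: no vanishing denominators *)
  (forall n : nat, poch_prod b n <> 0) ->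
  (forall k : nat, poch (f + 1) k <> 0) ->
  (forall k : nat, poch e k <> 0) ->
  (forall n k : nat, (k <= n)%nat -> poch (-1 - e - RtoC (INR n)) k <> 0) ->
  (* all series involved converge (absolutely) *)
  (forall n : nat, ex_series (fun k => Cmod (hyp_term (lhs_num d e n) (lhs_den e f) x k))) ->
  ex_series (fun n => Cmod (lhs_term a b d e f x y n)) ->
  ex_series (fun n => Cmod (rhs_term a b d e f x y n)) ->
  (forall n : nat, ex_series (fun k => Cmod (lhs_double a b d e f x y n k))) ->
  ex_series (fun n => Series (fun k => Cmod (lhs_double a b d e f x y n k))) ->
  CSeries (lhs_term a b d e f x y) = CSeries (rhs_term a b d e f x y).
Proof.
  intros Hb Hf He Hq Hx _ _ abs_row abs_rows.
  unfold CSeries; f_equal.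
  - apply (Series_pr_lhs_rhs Re re_le_Cmod Re_Cmult_CSeries); assumption.
  - apply (Series_pr_lhs_rhs Im Im_le_Cmod Im_Cmult_CSeries); assumption.
Qed.
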